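(* Let $c$ be a prompt, $x_0$ a clean image in $\mathbb{R}^d$, $\epsilon\in\mathbb{R}^d$ a noise vector, $t\in[0,1]$, and $x_t=(1-t)x_0+t\epsilon$; let $v = \epsilon - x_0$ be the forward-process velocity target. Let $v_\theta(x_t,t,c)$ and $v_{\mathrm{old}}(x_t,t,c)$ be the trainable and rollout velocity predictions, with corresponding clean-image predictions $f_\theta = x_t - t\,v_\theta$ and $f_{\mathrm{old}} = x_t - t\,v_{\mathrm{old}}$. Let $r=r(x_0,c)\in[0,1]$ be a normalized optimality score, $A = A(x_0,c) = 2r-1$, and $\beta>0$. Define the DiffusionNFT branches $v_\theta^+ = (1-\beta)v_{\mathrm{old}} + \beta v_\theta$ and $v_\theta^- = (1+\beta)v_{\mathrm{old}} - \beta v_\theta$ and the branch loss \[ \ell_{\mathrm{NFT}} = r\,\|v_\theta^+ - v\|^2 + (1-r)\,\|v_\theta^- - v\|^2. \] Then the prediction-space version $t^2\,\ell_{\mathrm{NFT}}$ of this loss equals, up to a term independent of $\theta$, \[ \beta A(x_0,c)\,\|x_0 - f_\theta(x_t,t,c)\|^2 + \beta\bigl(\beta - A(x_0,c)\bigr)\,\|f_\theta(x_t,t,c) - f_{\mathrm{old}}(x_t,t,c)\|^2 . \] That is, it is the AdvantageFlow per-sample loss with reference regularization strength $\lambda = 0$ and rollout regularization strength chosen as $\gamma_{\mathrm{NFT}}(A) = \beta(\beta - A(x_0,c))$ (with the advantage-weighted term scaled by $\beta$).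
   Context: The AdvantageFlow per-sample loss is $A(x_0,c)\|f_\theta(x_t,t,c)-x_0\|^2 + \gamma\|f_\theta(x_t,t,c)-f_{\mathrm{old}}(x_t,t,c)\|^2 + \lambda\|f_\theta(x_t,t,c)-f_{\mathrm{ref}}(x_t,t,c)\|^2$, where $f_{\mathrm{ref}}$ is a fixed reference predictor and $\gamma,\lambda\ge 0$ are regularization strengths. The passage from velocity losses to prediction losses multiplies by $t^2$, using $t^2\|v_\theta - v\|^2 = \|x_0 - f_\theta\|^2$ and $t^2\|v_\theta - v_{\mathrm{old}}\|^2 = \|f_\theta - f_{\mathrm{old}}\|^2$. $\|\cdot\|$ is the Euclidean norm. *)

From mathcomp Require Import all_boot all_order all_algebra.
Set Implicit Arguments. Unset Strict Implicit. Unset Printing Implicit Defensive.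
Import Order.TTheory GRing.Theory Num.Theory.
Local Open Scope ring_scope.

Definition enorm (R : rcfType) (d : nat) (u : 'rV[R]_d) : R :=
  Num.sqrt (\sum_(i < d) u ord0 i ^+ 2).

Definition xt_of (R : rcfType) (d : nat) (x0 eps : 'rV[R]_d) (t : R) : 'rV[R]_d :=
  (1 - t) *: x0 + t *: eps.

Definition fpred (R : rcfType) (d : nat) (xt : 'rV[R]_d) (t : R) (v : 'rV[R]_d)
  : 'rV[R]_d := xt - t *: v.

Definition nft_loss (R : rcfType) (d : nat) (r beta : R)
  (vth vold v : 'rV[R]_d) : R :=
  let vplus := (1 - beta) *: vold + beta *: vth in
  let vminus := (1 + beta) *: vold - beta *: vth in
  r * enorm (vplus - v) ^+ 2 + (1 - r) * enorm (vminus - v) ^+ 2.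

Definition advflow_loss (R : rcfType) (d : nat) (A gamma lambda : R)
  (x0 fth fold fref : 'rV[R]_d) : R :=
  A * enorm (fth - x0) ^+ 2 + gamma * enorm (fth - fold) ^+ 2
  + lambda * enorm (fth - fref) ^+ 2.

From mathcomp Require Import all_boot all_order all_algebra.
From mathcomp Require Import ring.
Import Order.TTheory GRing.Theory Num.Theory.
Local Open Scope ring_scope.

(* Write a, o for the trainable and rollout velocities, u := o - v and
   w := a - o.  The branches are v^± - v = u ± beta w, so the r-weighted sum of
   their squared norms is |u|^2 + beta^2 |w|^2 + 2 beta A <u, w>, and trading
   the cross term for beta A |u + w|^2 = beta A |a - v|^2 gives
   beta A |a - v|^2 + beta (beta - A) |a - o|^2 + (1 - beta A) |o - v|^2, whose
   last term does not involve theta.  Since x_t - t v = x_0, the prediction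
   map f = x_t - t (.) sends differences of velocities to t times differences
   of predictions, which turns the velocity norms into prediction norms at the
   cost of the factor t^2. *)

Section FlowMatchingLosses.

Context {R : rcfType} {d : nat}.
Implicit Types (u xt a b o v : 'rV[R]_d) (k r beta t : R).

Lemma sqr_enorm u : enorm u ^+ 2 = \sum_(i < d) u ord0 i ^+ 2.
Proof. by rewrite sqr_sqrtr // sumr_ge0 // => i _; exact: sqr_ge0. Qed.

Lemma enormN u : enorm (- u) = enorm u.
Proof.
by rewrite /enorm; congr Num.sqrt; apply: eq_bigr => i _; rewrite mxE sqrrN.
Qed.

Lemma sqr_enormZ k u : enorm (k *: u) ^+ 2 = k ^+ 2 * enorm u ^+ 2.
Proof.
by rewrite !sqr_enorm mulr_sumr; apply: eq_bigr => i _; rewrite mxE exprMn.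
Qed.

Lemma fpred_flow_velocity (x0 eps : 'rV[R]_d) t :
  fpred (xt_of x0 eps t) t (eps - x0) = x0.
Proof. by apply/rowP => i; rewrite !mxE; ring. Qed.

Lemma fpredB xt t a b :
  fpred xt t a - fpred xt t b = t *: (b - a).
Proof. by apply/rowP => i; rewrite !mxE; ring. Qed.

Lemma nft_lossE r beta a o v :
  let A := 2 * r - 1 in
  nft_loss r beta a o v
  = beta * A * enorm (a - v) ^+ 2 + beta * (beta - A) * enorm (a - o) ^+ 2
    + (1 - beta * A) * enorm (o - v) ^+ 2.
Proof.
rewrite /nft_loss !sqr_enorm !mulr_sumr -!big_split /=.
by apply: eq_bigr => i _; rewrite !mxE; ring.
Qed.

End FlowMatchingLosses.

Theorem proposition3
  (R : rcfType) (d : nat) (Prompt Theta : Type)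
  (vtheta : Theta -> 'rV[R]_d -> R -> Prompt -> 'rV[R]_d)
  (vold : 'rV[R]_d -> R -> Prompt -> 'rV[R]_d)
  (rscore : 'rV[R]_d -> Prompt -> R)
  (c : Prompt) (x0 eps : 'rV[R]_d) (t beta : R)
  (ht0 : 0 <= t) (ht1 : t <= 1)
  (hr0 : 0 <= rscore x0 c) (hr1 : rscore x0 c <= 1)
  (hbeta : 0 < beta) :
  let xt := xt_of x0 eps t in
  let v := eps - x0 in
  let r := rscore x0 c in
  let A := 2 * r - 1 in
  let fold := fpred xt t (vold xt t c) in
  exists K : R, forall theta : Theta,
    let fth := fpred xt t (vtheta theta xt t c) in
    t ^+ 2 * nft_loss r beta (vtheta theta xt t c) (vold xt t c) v
    = beta * A * enorm (x0 - fth) ^+ 2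
      + beta * (beta - A) * enorm (fth - fold) ^+ 2 + K.
Proof.
move=> xt v r A fold.
exists (t ^+ 2 * ((1 - beta * A) * enorm (vold xt t c - v) ^+ 2)).
move=> theta fth; set a := vtheta theta xt t c.
have clean_err : x0 - fth = t *: (a - v).
  by rewrite -{1}(fpred_flow_velocity x0 eps t) fpredB.
have rollout_gap : fth - fold = - (t *: (a - vold xt t c)).
  by rewrite fpredB -scalerN opprB.
rewrite clean_err rollout_gap enormN !sqr_enormZ nft_lossE.
by rewrite /A; ring.
Qed.
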